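(* Let $\delta>0$ and $\epsilon>2\delta\sum_{i\in\mathcal I}\pi_i$. Let $w\ge2$, let $(\mathbf x^w,\beta^w)$ be an optimal solution of $\mathbf{RMP}$ at iteration $w$, and let $i\in\mathcal I$. If there exists $\hat w\in\{1,\dots,w-1\}$ such that $\|x^w_i-x^{\hat w}_i\|\le\frac{\epsilon-2\delta\sum_{i'\in\mathcal I}\pi_{i'}}{2\alpha_x\sum_{i'\in\mathcal I}\pi_{i'}}$, then $\overline\theta^w_i-\beta^w_i\le\frac{\epsilon}{\sum_{i'\in\mathcal I}\pi_{i'}}$.
   Context: Consider $\min_{\mathbf x\in\mathcal X}f(\mathbf x)+\sum_{i\in\mathcal I}\pi_ig(x_i)$, where $\mathcal X$ is compact, $\mathcal I$ is finite, each $x_i$ is a (possibly overlapping) subvector of $\mathbf x$, $\pi_i\ge0$ with $\sum_i\pi_i>0$, and $g$ is a convex function with bounded subgradients: there is a finite constant $\alpha_x>0$ such that every subgradient of $g$ has 1-norm at most $\alpha_x$ ($\|\cdot\|$ denotes the 1-norm). A Benders scheme produces iterates $\mathbf x^{w'}$, $w'=1,2,\dots$; at each iteration $w'$ and for each $i$, the subproblem $g(x^{w'}_i)$ is solved to $\delta$-optimality, giving numbers $\underline\theta^{w'}_i\le g(x^{w'}_i)\le\overline\theta^{w'}_i$ with $\overline\theta^{w'}_i-\underline\theta^{w'}_i\le\delta$, and a vector $\underline\lambda^{w'}_i$ with $\|\underline\lambda^{w'}_i\|\le\alpha_x$ such that $\underline\theta^{w'}_i+(\underline\lambda^{w'}_i)^\top(z-x^{w'}_i)\le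 g(z)$ for all $z$. The relaxed master problem at iteration $w$ is $\mathbf{RMP}$: $\min_{\mathbf x\in\mathcal X,\beta}f(\mathbf x)+\sum_i\pi_i\beta_i$ s.t. $\beta_i\ge\underline\theta^{w'}_i+(\underline\lambda^{w'}_i)^\top(x_i-x^{w'}_i)$ for $w'=1,\dots,w-1$, $i\in\mathcal I$; its optimal solution defines $\mathbf x^w$ (with components $x^w_i$) and $\beta^w$. *)

From HB Require Import structures.
From mathcomp Require Import all_boot all_order all_algebra.
From mathcomp Require Import all_classical all_reals all_analysis.
Set Implicit Arguments. Unset Strict Implicit. Unset Printing Implicit Defensive.
Import Order.TTheory GRing.Theory Num.Theory.
Import numFieldNormedType.Exports.
Local Open Scope ring_scope.
Local Open Scope classical_set_scope.

Section Defs.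
Variable R : realType.

Definition dotv (n : nat) (u v : 'rV[R]_n) : R := \sum_(j < n) u 0 j * v 0 j.

Definition norm1 (n : nat) (v : 'rV[R]_n) : R := \sum_(j < n) `|v 0 j|.

Definition subvec (N n : nat) (s : 'I_n -> 'I_N) (x : 'rV[R]_N) : 'rV[R]_n :=
  \row_(j < n) x 0 (s j).

Definition convex_fun (n : nat) (g : 'rV[R]_n -> R) : Prop :=
  forall (x y : 'rV[R]_n) (t : R), 0 <= t <= 1 ->
    g (t *: x + (1 - t) *: y) <= t * g x + (1 - t) * g y.

Definition is_subgradient (n : nat) (g : 'rV[R]_n -> R) (z lam : 'rV[R]_n) : Prop :=
  forall y : 'rV[R]_n, g z + dotv lam (y - z) <= g y.

Definition RMP_feasible (I : finType) (N n : nat) (X : set 'rV[R]_N)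
  (s : I -> 'I_n -> 'I_N) (xs : nat -> 'rV[R]_N)
  (thl : nat -> I -> R) (lam : nat -> I -> 'rV[R]_n) (w : nat)
  (x : 'rV[R]_N) (beta : I -> R) : Prop :=
  X x /\
  forall (w' : nat) (i : I), (1 <= w' <= w - 1)%N ->
    thl w' i + dotv (lam w' i) (subvec (s i) x - subvec (s i) (xs w')) <= beta i.

Definition RMP_objective (I : finType) (N : nat) (f : 'rV[R]_N -> R) (pi : I -> R)
  (x : 'rV[R]_N) (beta : I -> R) : R :=
  f x + \sum_(i : I) pi i * beta i.

Definition RMP_optimal (I : finType) (N n : nat) (X : set 'rV[R]_N)
  (f : 'rV[R]_N -> R) (pi : I -> R)
  (s : I -> 'I_n -> 'I_N) (xs : nat -> 'rV[R]_N)
  (thl : nat -> I -> R) (lam : nat -> I -> 'rV[R]_n) (w : nat)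
  (x : 'rV[R]_N) (beta : I -> R) : Prop :=
  RMP_feasible X s xs thl lam w x beta /\
  forall (x' : 'rV[R]_N) (beta' : I -> R),
    RMP_feasible X s xs thl lam w x' beta' ->
    RMP_objective f pi x beta <= RMP_objective f pi x' beta'.

End Defs.

From HB Require Import structures.
From mathcomp Require Import all_boot all_order all_algebra.
From mathcomp Require Import all_classical all_reals all_analysis.
From mathcomp Require Import lra.
Set Implicit Arguments. Unset Strict Implicit. Unset Printing Implicit Defensive.
Import Order.TTheory GRing.Theory Num.Theory.
Import numFieldNormedType.Exports.
Local Open Scope ring_scope.
Local Open Scope classical_set_scope.

(* Let u = x^w_i and v = x^wh_i.  The cut generated at iteration wh is
   satisfied by (x^w, beta^w), so beta^w_i >= thl^wh_i - alpha |u - v|, and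
   thl^wh_i >= g(v) - delta.  The cut generated at iteration w, evaluated at
   v, gives g(v) >= thl^w_i - alpha |u - v| >= thu^w_i - delta - alpha |u - v|.
   Hence thu^w_i - beta^w_i <= 2 (delta + alpha |u - v|), which the proximity
   hypothesis bounds by eps / sum pi. *)

Section DeltaCuts.
Variable R : realType.

Lemma norm1N (m : nat) (v : 'rV[R]_m) : norm1 (- v) = norm1 v.
Proof. by apply: eq_bigr => j _; rewrite mxE normrN. Qed.

Lemma norm1_ge0 (m : nat) (v : 'rV[R]_m) : 0 <= norm1 v.
Proof. exact: sumr_ge0. Qed.

Lemma norm_dotv_le (m : nat) (u v : 'rV[R]_m) :
  `|dotv u v| <= norm1 u * norm1 v.
Proof.
rewrite /dotv /norm1 mulr_suml; apply: le_trans (ler_norm_sum _ _ _) _.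
apply: ler_sum => j _; rewrite normrM ler_wpM2l //.
by rewrite (bigD1 j) //= lerDl sumr_ge0.
Qed.

Lemma oppr_dotv_le (m : nat) (a : R) (lam v : 'rV[R]_m) :
  norm1 lam <= a -> - dotv lam v <= a * norm1 v.
Proof.
move=> lam_le; apply: le_trans (ler_norm (- dotv lam v)) _; rewrite normrN.
by apply: le_trans (norm_dotv_le _ _) _; rewrite ler_wpM2r ?norm1_ge0.
Qed.

Lemma norm1_distC (m : nat) (u v : 'rV[R]_m) : norm1 (u - v) = norm1 (v - u).
Proof. by rewrite -norm1N opprB. Qed.

Definition delta_cut (m : nat) (g : 'rV[R]_m -> R) (delta alpha : R)
    (z : 'rV[R]_m) (tl tu : R) (lam : 'rV[R]_m) : Prop :=
  [/\ tl <= g z, g z <= tu, tu - tl <= delta, norm1 lam <= alpha &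
      forall y, tl + dotv lam (y - z) <= g y].

Lemma delta_cut_gap (m : nat) (g : 'rV[R]_m -> R) (delta alpha b : R)
    (u v lu lv : 'rV[R]_m) (tlu tuu tlv tuv : R) :
  delta_cut g delta alpha u tlu tuu lu ->
  delta_cut g delta alpha v tlv tuv lv ->
  tlv + dotv lv (u - v) <= b ->
  tuu - b <= 2 * (delta + alpha * norm1 (u - v)).
Proof.
case=> _ _ gap_u lu_le cut_u [_ gv_le gap_v lv_le _] b_ge.
have := cut_u v; have := oppr_dotv_le (u - v) lv_le.
have := oppr_dotv_le (v - u) lu_le; rewrite -norm1_distC.
lra.
Qed.

Lemma proximity_gap_le (alpha delta eps P d : R) :
  0 < alpha -> 0 < P ->
  d <= (eps - 2 * delta * P) / (2 * alpha * P) ->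
  2 * (delta + alpha * d) <= eps / P.
Proof.
move=> alpha_gt0 P_gt0; rewrite ler_pdivlMr ?mulr_gt0 // => d_le.
rewrite ler_pdivlMr //; lra.
Qed.

End DeltaCuts.

Theorem lemma16 (R : realType) (I : finType) (N n : nat)
  (X : set 'rV[R]_N) (f : 'rV[R]_N -> R) (g : 'rV[R]_n -> R)
  (pi : I -> R) (s : I -> 'I_n -> 'I_N) (alpha delta eps : R)
  (xs : nat -> 'rV[R]_N) (beta : nat -> I -> R)
  (thl thu : nat -> I -> R) (lam : nat -> I -> 'rV[R]_n)
  (w : nat) (i : I) :
  compact X ->
  (forall k, injective (s k)) ->
  (forall k, 0 <= pi k) -> 0 < \sum_(k : I) pi k ->
  convex_fun g ->
  0 < alpha ->
  (forall z lm, is_subgradient g z lm -> norm1 lm <= alpha) ->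
  0 < delta ->
  (* delta-optimal solution of every subproblem at every iteration w' >= 1 *)
  (forall (w' : nat) (k : I), (1 <= w')%N ->
     [/\ thl w' k <= g (subvec (s k) (xs w')),
         g (subvec (s k) (xs w')) <= thu w' k,
         thu w' k - thl w' k <= delta,
         norm1 (lam w' k) <= alpha &
         forall z, thl w' k + dotv (lam w' k) (z - subvec (s k) (xs w')) <= g z]) ->
  2 * delta * (\sum_(k : I) pi k) < eps ->
  (2 <= w)%N ->
  RMP_optimal X f pi s xs thl lam w (xs w) (beta w) ->
  (exists2 wh : nat, (1 <= wh <= w - 1)%N &
     norm1 (subvec (s i) (xs w) - subvec (s i) (xs wh))
       <= (eps - 2 * delta * (\sum_(k : I) pi k)) / (2 * alpha * (\sum_(k : I) pi k))) ->
  thu w i - beta w i <= eps / (\sum_(k : I) pi k).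
Proof.
move=> _ _ _ pi_gt0 _ alpha_gt0 _ _ cuts _ w_ge2 [[_ rmp_cuts] _] [wh wh_range close].
have /andP[wh_ge1 _] := wh_range.
have cut_w := cuts w i (ltnW w_ge2).
have cut_wh := cuts wh i wh_ge1.
apply: le_trans (proximity_gap_le alpha_gt0 pi_gt0 close).
exact: delta_cut_gap cut_w cut_wh (rmp_cuts wh i wh_range).
Qed.
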